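(* Let $G$ be a weakly-reversible chemical reaction network in $s$ species and $\mathbf{k}$ a field of characteristic zero. If the ideal $(\mathcal{E}_G)\subseteq\mathbf{k}[x_1,\dots,x_s]$ is prime, then $G$ is not catalytic.
   Context: A chemical reaction network (CRN) consists of positive integers $s,n$, a finite directed graph $G$ with vertex set $\{1,\dots,n\}$ and edge set $E(G)$, and an injective labeling of vertex $i$ by a monic monomial $\psi_i=\prod_{j=1}^s x_j^{y_{ij}}$. $G$ is weakly-reversible iff each connected component is strongly connected. The associated event-system $\mathcal{E}_G$ is the set of binomials $\psi_i-\psi_j$, one for each pair $\{i,j\}$ with $(i,j)\in E(G)$ or $(j,i)\in E(G)$, and $(\mathcal{E}_G)$ is the ideal it generates. The event-graph $\overline{G}$ has as vertices all monic monomials in $x_1,\dots,x_s$, with an edge $(N\psi_i,N\psi_j)$ for each $(i,j)\in E(G)$ and each monic monomial $N$. A weakly-reversible CRN is catalytic iff there exist monic monomials $M,N$ path-connected in $\overline{G}$ such that $M/\gcd(M,N)$ and $N/\gcd(M,N)$ are not path-connected in $\overline{G}$. *)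

From Stdlib Require Import Relations.
From mathcomp Require Import all_boot all_order all_algebra.
From mathcomp Require Import mpoly.
Set Implicit Arguments. Unset Strict Implicit. Unset Printing Implicit Defensive.
Import GRing.Theory.
Local Open Scope ring_scope.

(* A chemical reaction network: vertices 'I_n, directed edge relation
   [edge : rel 'I_n], labels [psi i] = monic monomial x^{y_i} encoded by its
   exponent vector (a multinomial in s variables). *)
Definition CRN (s n : nat) (edge : rel 'I_n) (psi : 'I_n -> 'X_{1..s}) : Prop :=
  (0 < s)%N /\ (0 < n)%N /\ injective psi.

Definition weakly_reversible (n : nat) (edge : rel 'I_n) : Prop :=
  forall i j : 'I_n,
    connect (fun a b => edge a b || edge b a) i j -> connect edge i j.

(* Edge relation of the event-graph: (N * psi_i, N * psi_j) for (i,j) in E(G). *)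
Definition event_edge (s n : nat) (edge : rel 'I_n) (psi : 'I_n -> 'X_{1..s})
  (M M' : 'X_{1..s}) : Prop :=
  exists (i j : 'I_n) (N : 'X_{1..s}),
    edge i j /\ M = (N + psi i)%MM /\ M' = (N + psi j)%MM.

(* Path-connectedness in the event-graph (paths in the underlying undirected
   graph; for weakly-reversible networks this agrees with directed paths). *)
Definition event_connected (s n : nat) (edge : rel 'I_n)
  (psi : 'I_n -> 'X_{1..s}) : relation 'X_{1..s} :=
  clos_refl_sym_trans _ (event_edge edge psi).

(* M / gcd(M, N) for monic monomials, on exponent vectors. *)
Definition mdivgcd (s : nat) (M N : 'X_{1..s}) : 'X_{1..s} :=
  [multinom (M i - minn (M i) (N i))%N | i < s].

Definition catalytic (s n : nat) (edge : rel 'I_n) (psi : 'I_n -> 'X_{1..s})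
  : Prop :=
  exists M N : 'X_{1..s},
    event_connected edge psi M N /\
    ~ event_connected edge psi (mdivgcd M N) (mdivgcd N M).

Definition in_event_ideal (k : fieldType) (s n : nat) (edge : rel 'I_n)
  (psi : 'I_n -> 'X_{1..s}) (p : {mpoly k[s]}) : Prop :=
  exists (m : nat) (c : 'I_m -> {mpoly k[s]}) (a b : 'I_m -> 'I_n),
    (forall t, edge (a t) (b t) || edge (b t) (a t)) /\
    p = \sum_(t < m) c t * ('X_[psi (a t)] - 'X_[psi (b t)]).
Arguments in_event_ideal k [s n] edge psi p.

Definition event_ideal_prime (k : fieldType) (s n : nat) (edge : rel 'I_n)
  (psi : 'I_n -> 'X_{1..s}) : Prop :=
  ~ in_event_ideal k edge psi 1 /\
  forall p q : {mpoly k[s]}, in_event_ideal k edge psi (p * q) ->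
    in_event_ideal k edge psi p \/ in_event_ideal k edge psi q.
Arguments event_ideal_prime k [s n] edge psi.

(* Every function f on monomials extends linearly to a functional on k[x]; if
   f is constant along the edges of the event-graph, the functional kills the
   generators N (psi_i - psi_j) and hence the whole ideal (E_G).  With f = 1
   this shows that no monomial lies in (E_G); with f the indicator of a
   connected component it shows that x^M - x^N lies in (E_G) only if M and N
   are connected.  Now if M ~ N, then x^M - x^N = x^G (x^M' - x^N') with
   G = gcd(M, N), and primality puts either x^G or x^M' - x^N' into (E_G). *)
From HB Require Import structures.
From mathcomp Require Import all_boot all_order all_algebra.
From mathcomp Require Import ssrcomplements mpoly bigenough.
From Stdlib Require Import Relations ClassicalDescription.
Set Implicit Arguments. Unset Strict Implicit. Unset Printing Implicit Defensive.
Import GRing.Theory BigEnough.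
Local Open Scope ring_scope.

Section LinearExtension.
Variables (k : nzRingType) (s : nat).
Implicit Types (f g : 'X_{1..s} -> k) (p : {mpoly k[s]}).

Definition mlinext f p : k := \sum_(m <- msupp p) p@_m * f m.

Lemma mlinextE f p i : (msize p <= i)%N ->
  mlinext f p = \sum_(m : 'X_{1..s < i}) p@_m * f m.
Proof.
move=> le_pi; rewrite /mlinext (big_mksub 'X_{1..s < i}) ?msupp_uniq //=.
  by rewrite big_rmcond //= => m /memN_msupp_eq0 ->; rewrite mul0r.
by move=> m /msize_mdeg_lt /leq_trans; apply.
Qed.

Lemma mlinext_is_zmod_morphism f : zmod_morphism (mlinext f).
Proof.
move=> p q; pose_big_enough i.
  rewrite !(mlinextE f _ (i := i)) // -sumrB.
  by apply: eq_bigr => m _; rewrite mcoeffB mulrBl.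
by close.
Qed.

HB.instance Definition _ f := GRing.isZmodMorphism.Build {mpoly k[s]} k (mlinext f)
  (mlinext_is_zmod_morphism f).

Lemma eq_mlinext f g : f =1 g -> mlinext f =1 mlinext g.
Proof. by move=> eq_fg p; apply: eq_bigr => m _; rewrite eq_fg. Qed.

Lemma mlinextZX f c m : mlinext f (c *: 'X_[m]) = c * f m.
Proof.
rewrite /mlinext; have [->|nz_c] := eqVneq c 0.
  by rewrite scale0r msupp0 big_nil mul0r.
by rewrite msuppMCX // big_seq1 mcoeffZ mcoeffX eqxx mulr1.
Qed.

Lemma mlinextX f m : mlinext f 'X_[m] = f m.
Proof. by rewrite -[X in mlinext f X]scale1r mlinextZX mul1r. Qed.

Lemma mlinextMX f p a :
  mlinext f (p * 'X_[a]) = mlinext (fun m => f (m + a)%MM) p.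
Proof.
rewrite [p]mpolyE mulr_suml !raddf_sum /=.
by apply: eq_bigr => m _; rewrite -scalerAl -mpolyXD !mlinextZX.
Qed.

End LinearExtension.

Section EventIdeal.
Variables (k : fieldType) (s n : nat) (edge : rel 'I_n) (psi : 'I_n -> 'X_{1..s}).
Local Notation event_ideal := (in_event_ideal k edge psi).
Local Notation connected := (event_connected edge psi).

Lemma event_ideal0 : event_ideal 0.
Proof.
exists 0%N, (fun _ => 0), (tnth [tuple]), (tnth [tuple]).
by split; [case | rewrite big_ord0].
Qed.

Lemma event_idealN p : event_ideal p -> event_ideal (- p).
Proof.
move=> [m [c [a [b [ab_edge ->]]]]]; exists m, (fun t => - c t), a, b.
by split=> //; rewrite -sumrN; apply: eq_bigr => t _; rewrite mulNr.
Qed.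

Lemma event_idealD p q : event_ideal p -> event_ideal q -> event_ideal (p + q).
Proof.
move=> [m1 [c1 [a1 [b1 [ab1 ->]]]]] [m2 [c2 [a2 [b2 [ab2 ->]]]]].
pose join T (F1 : 'I_m1 -> T) (F2 : 'I_m2 -> T) (t : 'I_(m1 + m2)) :=
  match split t with inl i => F1 i | inr j => F2 j end.
exists (m1 + m2)%N, (join _ c1 c2), (join _ a1 a2), (join _ b1 b2); split.
  by move=> t; rewrite /join; case: (split t).
rewrite big_split_ord /=; congr (_ + _); apply: eq_bigr => t _;
  by rewrite /join ?(unsplitK (inl _ t)) ?(unsplitK (inr _ t)).
Qed.

Lemma connected_event_idealXB M N : connected M N -> event_ideal ('X_[M] - 'X_[N]).
Proof.
elim=> {M N} [M N [i [j [L [e_ij [-> ->]]]]] | M | M N _ NM | M N P _ MN _ NP].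
- exists 1%N, (fun _ => 'X_[L]), (fun _ => i), (fun _ => j).
  by rewrite big_ord1 mulrBr -!mpolyXD !(addmC L) e_ij.
- by rewrite subrr; apply: event_ideal0.
- by rewrite -opprB; apply: event_idealN.
- by rewrite -[_ - _](subrKA 'X_[N]); apply: event_idealD.
Qed.

Lemma mlinext_event_ideal (f : 'X_{1..s} -> k) p :
  (forall M N, event_edge edge psi M N -> f M = f N) ->
  event_ideal p -> mlinext f p = 0.
Proof.
move=> f_edge [m [c [a [b [ab_edge ->]]]]]; rewrite raddf_sum big1 //= => t _.
rewrite mulrBr raddfB /= !mlinextMX; apply/eqP; rewrite subr_eq0; apply/eqP.
apply: eq_mlinext => L; have [e|e] := orP (ab_edge t).
  by apply: f_edge; exists (a t), (b t), L.
by symmetry; apply: f_edge; exists (b t), (a t), L.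
Qed.

Lemma monomial_notin_event_ideal M : ~ event_ideal 'X_[M].
Proof.
move=> /(mlinext_event_ideal (f := fun _ => 1) (fun _ _ _ => erefl)).
by rewrite mlinextX; apply/eqP; rewrite oner_eq0.
Qed.

Lemma event_idealXB_connected M N :
  event_ideal ('X_[M] - 'X_[N]) -> connected M N.
Proof.
pose f L : k := if excluded_middle_informative (connected M L) then 1 else 0.
have f_edge L L' : event_edge edge psi L L' -> f L = f L'.
  move=> e; rewrite /f; have LL' := rst_step _ _ _ _ e.
  case: excluded_middle_informative => ML;
    case: excluded_middle_informative => ML' //.
  - by case: ML'; apply: rst_trans LL'.
  - by case: ML; apply: rst_trans ML' (rst_sym _ _ _ _ LL').
move=> /(mlinext_event_ideal f_edge); rewrite raddfB /= !mlinextX /f {f_edge f}.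
case: excluded_middle_informative => /= [_|]; last by case; apply: rst_refl.
case: excluded_middle_informative => //= _ /eqP.
by rewrite subr0 oner_eq0.
Qed.

End EventIdeal.

Definition mgcd (s : nat) (M N : 'X_{1..s}) : 'X_{1..s} :=
  [multinom minn (M i) (N i) | i < s].

Lemma mgcdC (s : nat) (M N : 'X_{1..s}) : mgcd M N = mgcd N M.
Proof. by apply/mnmP => i; rewrite !mnmE minnC. Qed.

Lemma mgcd_mdivgcd (s : nat) (M N : 'X_{1..s}) :
  (mgcd M N + mdivgcd M N)%MM = M.
Proof. by apply/mnmP => i; rewrite mnmDE !mnmE subnKC ?geq_minl. Qed.

Theorem theorem5p2 (k : fieldType) (s n : nat) (edge : rel 'I_n)
  (psi : 'I_n -> 'X_{1..s}) :
  [pchar k]%R =i pred0 ->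
  CRN edge psi ->
  weakly_reversible edge ->
  event_ideal_prime k edge psi ->
  ~ catalytic edge psi.
Proof.
move=> _ _ _ [_ ideal_prime] [M [N [MN not_M'N']]].
have := connected_event_idealXB k MN.
rewrite -[in 'X_[M]](mgcd_mdivgcd M N) -[in 'X_[N]](mgcd_mdivgcd N M) mgcdC.
rewrite !mpolyXD -mulrBr => /ideal_prime [/monomial_notin_event_ideal //|].
by move/event_idealXB_connected/not_M'N'.
Qed.
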